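(* Let $\alpha\in\mathbb{C}$, $\beta\in\mathbb{C}\setminus\mathbb{Z}$, and $D\in\mathrm{Der}(\mathcal{W},\mathcal{F}_\alpha\otimes\mathcal{F}_\beta)_0$. Write $D(L_1)=\sum_{i\in\mathbb{Z}}a_{1,i}v_i\otimes v_{1-i}$ and $l=\max\{|i|: a_{1,i}\neq0\}$ (assuming $D(L_1)\ne 0$). Then there exist $c_{-l},\dots,c_l\in\mathbb{C}$ such that $$D(L_1)=L_1\cdot\Big(\sum_{i=-l}^{l}c_i\,v_i\otimes v_{-i}\Big)+c_l(\alpha+l)\,v_{l+1}\otimes v_{-l}.$$
   Context: The Witt algebra $\mathcal{W}$ has basis $\{L_n\mid n\in\mathbb{Z}\}$ and bracket $[L_m,L_n]=(m-n)L_{m+n}$. $\mathcal{F}_\alpha$ has basis $\{v_n\}$ with $L_m\cdot v_n=-(\alpha m+n)v_{m+n}$; $\mathcal{F}_\alpha\otimes\mathcal{F}_\beta$ is a $\mathcal{W}$-module via $L_m\cdot(v_i\otimes v_j)=-(i+\alpha m)v_{m+i}\otimes v_j-(j+\beta m)v_i\otimes v_{m+j}$, graded by $(\mathcal{F}_\alpha\otimes\mathcal{F}_\beta)_k=\bigoplus_i\mathbb{C}\,v_i\otimes v_{k-i}$. $\mathrm{Der}(\mathcal{W},\mathcal{F}_\alpha\otimes\mathcal{F}_\beta)_0$ is the space of linear maps $D$ with $D([x,y])=x\cdot D(y)-y\cdot D(x)$ and $D(L_m)\in(\mathcal{F}_\alpha\otimes\mathcal{F}_\beta)_m$ for all $m$.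 *)

From HB Require Import structures.
From mathcomp Require Import all_boot all_order all_algebra.
From mathcomp Require Import complex.
Set Implicit Arguments. Unset Strict Implicit. Unset Printing Implicit Defensive.
Import Order.TTheory GRing.Theory Num.Theory.
Local Open Scope ring_scope.

(* A homogeneous element of degree n of F_alpha (x) F_beta,
     sum_i b_i v_i (x) v_{n-i},
   is encoded by its coefficient function b : int -> C (b i = coefficient of
   v_i (x) v_{n-i}), which must be finitely supported. *)

Definition fin_supp (C : nzRingType) (b : int -> C) : Prop :=
  exists N : nat, forall i : int, (N < absz i)%N -> b i = 0.

(* L_m . (sum_i b_i v_i (x) v_{n-i})  is of degree m+n; its coefficient at
   v_i (x) v_{m+n-i} is returned by [tens_act alpha beta m n b i]:
   L_m . (v_j (x) v_{n-j}) = -(j + alpha m) v_{m+j} (x) v_{n-j}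
                             -(n-j + beta m) v_j (x) v_{m+n-j}. *)
Definition tens_act (C : nzRingType) (alpha beta : C) (m n : int)
  (b : int -> C) (i : int) : C :=
  - (((i - m)%:~R + alpha * m%:~R) * b (i - m))
  - (((n - i)%:~R + beta * m%:~R) * b i).

(* A degree-0 linear map D : W -> F_alpha (x) F_beta is determined by the
   family a : int -> int -> C, where a m is the coefficient function of
   D(L_m) in degree m.  It is a derivation iff the derivation identity holds
   on basis elements: D([L_m,L_n]) = (m-n) D(L_{m+n}) = L_m.D(L_n) - L_n.D(L_m). *)
Definition is_deg0_der (C : nzRingType) (alpha beta : C)
  (a : int -> int -> C) : Prop :=
  (forall m, fin_supp (a m)) /\
  (forall m n i : int,
     (m - n)%:~R * a (m + n) i
     = tens_act alpha beta m n (a n) i - tens_act alpha beta n m (a m) i).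

From HB Require Import structures.
From mathcomp Require Import all_boot all_order all_algebra.
From mathcomp Require Import complex.
From mathcomp Require Import zify.
Set Implicit Arguments.
Unset Strict Implicit.
Unset Printing Implicit Defensive.
Import Order.TTheory GRing.Theory Num.Theory.
Local Open Scope ring_scope.
Local Open Scope complex_scope.

(* Only the L_1-component of the derivation matters: on degree 0, L_1 acts by
   a bidiagonal operator whose diagonal entries [-(beta - i)] never vanish
   since beta is not an integer, so the coefficients c_{-l}, ..., c_l can be
   solved for one after the other, starting from c_{-l-1} = 0.  The only
   equation left over is the one at index l+1, and it is exactly absorbed by
   the correction term c_l (alpha + l) v_{l+1} (x) v_{-l}. *)

Lemma tens_act_L1_deg0 (F : nzRingType) (alpha beta : F) (c : int -> F)
    (i : int) :
  tens_act alpha beta 1 0 c i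
  = - (((i - 1)%:~R + alpha) * c (i - 1)) - (beta - i%:~R) * c i.
Proof. by rewrite /tens_act mulr1 sub0r mulrNz [_ + beta * _]addrC mulr1. Qed.

Section SolveL1.

Variables (F : fieldType) (alpha beta : F).
Hypothesis beta_notin_int : forall z : int, beta <> z%:~R.
Variables (b : int -> F) (l : nat).

(* [solve_coef k] is c_{k-l-1}. *)
Fixpoint solve_coef (k : nat) : F :=
  match k with
  | 0%N => 0
  | k'.+1 => - (b (k'%:Z - l%:Z)
                + ((k'%:Z - l%:Z - 1)%:~R + alpha) * solve_coef k')
             / (beta - (k'%:Z - l%:Z)%:~R)
  end.

Lemma solve_coefP (k : nat) :
  b (k%:Z - l%:Z)
  = - (((k%:Z - l%:Z - 1)%:~R + alpha) * solve_coef k)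
    - (beta - (k%:Z - l%:Z)%:~R) * solve_coef k.+1.
Proof.
have beta_sub_neq0 : beta - (k%:Z - l%:Z)%:~R != 0.
  by rewrite subr_eq0; apply/eqP; apply: beta_notin_int.
by rewrite /= mulNr mulrN opprK mulrCA mulfV // mulr1 addrCA addNr addr0.
Qed.

Definition solve_coef_int (j : int) : F :=
  if (absz j <= l)%N then solve_coef (absz (j + l%:Z + 1)) else 0.

Lemma solve_coef_intE (k : nat) : (k <= l + l + 1)%N ->
  solve_coef_int (k%:Z - l%:Z - 1) = solve_coef k.
Proof.
move=> le_k; rewrite /solve_coef_int.
have -> : absz (k%:Z - l%:Z - 1 + l%:Z + 1) = k by lia.
by case: ifP => // out_k; have -> : k = 0%N by lia.
Qed.

Lemma solve_coef_int_out (j : int) : (l < absz j)%N -> solve_coef_int j = 0.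
Proof. by rewrite /solve_coef_int ltnNge => /negPf ->. Qed.

Hypothesis b_supp : forall i : int, (l < absz i)%N -> b i = 0.

Lemma solve_coef_intP (i : int) :
  b i = tens_act alpha beta 1 0 solve_coef_int i
        + (if i == l%:Z + 1
           then solve_coef (absz (l%:Z + l%:Z + 1)) * (alpha + (l%:Z)%:~R)
           else 0).
Proof.
rewrite tens_act_L1_deg0.
have [i_in | i_out] := boolP (absz i <= l)%N.
  set k := absz (i + l%:Z).
  have i_eq : i = k%:Z - l%:Z by lia.
  have -> : solve_coef_int (i - 1) = solve_coef k.
    by rewrite -solve_coef_intE; [congr solve_coef_int; lia | lia].
  have -> : solve_coef_int i = solve_coef k.+1.
    by rewrite -solve_coef_intE; [congr solve_coef_int; lia | lia].
  have -> : (i == l%:Z + 1) = false by lia.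
  by rewrite addr0 {1 2 3}i_eq solve_coefP.
rewrite -ltnNge in i_out.
rewrite b_supp // [solve_coef_int i]solve_coef_int_out // mulr0 subr0.
have [-> | ne_i] := eqVneq i (l%:Z + 1).
  have -> : solve_coef_int (l%:Z + 1 - 1) = solve_coef (absz (l%:Z + l%:Z + 1)).
    by rewrite addrK /solve_coef_int absz_nat leqnn.
  by rewrite addrK [alpha + _]addrC mulrC addNr.
have out_pred : (l < absz (i - 1))%N by move/eqP: ne_i; lia.
by rewrite solve_coef_int_out // mulr0 oppr0 addr0.
Qed.

End SolveL1.

Theorem lemmaL1p4 (R : rcfType) (alpha beta : R[i])
  (hbeta : forall z : int, beta <> z%:~R)
  (a : int -> int -> R[i]) (hD : is_deg0_der alpha beta a)
  (l : nat)
  (hl_attained : a 1 (l%:Z) != 0 \/ a 1 (- (l%:Z)) != 0)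
  (hl_max : forall i : int, (l < absz i)%N -> a 1 i = 0) :
  exists c : int -> R[i],
    forall i : int,
      a 1 i
      = tens_act alpha beta 1 0
          (fun j : int => if (absz j <= l)%N then c j else 0) i
        + (if i == (l%:Z + 1) then c (l%:Z) * (alpha + (l%:Z)%:~R) else 0).
Proof.
exists (fun j => solve_coef alpha beta (a 1) l (absz (j + l%:Z + 1))) => i.
by rewrite (solve_coef_intP alpha hbeta hl_max i).
Qed.
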